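(* Let $\mathcal{M}\in\mathbb{R}^{m\times m}$ be a skew-symmetric matrix ($\mathcal{M}^\top=-\mathcal{M}$), viewed as the payoff matrix (for player 1) of a finite two-player zero-sum symmetric game in which each player has the pure strategy set $S_g=\{1,\dots,m\}$. Let $C=\{C_1,\dots,C_{|C|}\}$ be the Nash Clustering of this game, and for $k\in[|C|]$ let $\mathbf{p_k}=\mathrm{Nash}\big(\mathcal{M}\,\big|\,\bigcup_{r=k}^{|C|}C_r\big)$. Define $\mathrm{NPP}(C_i,C_j)=\mathbf{p_i}^\top\mathcal{M}\,\mathbf{p_j}$. Then $\mathrm{NPP}(C_i,C_j)\ge 0$ for all $i\le j$, and $\mathrm{NPP}(C_i,C_j)\le 0$ for all $i>j$.
   Context: For a nonempty subset $X\subseteq S_g$, a symmetric Nash equilibrium of the game restricted to $X$ is a probability vector $\mathbf{p}\in\Delta_m$ with $\mathbf{p}_s=0$ for $s\notin X$ such that $\mathbf{q}^\top\mathcal{M}\mathbf{p}\le \mathbf{p}^\top\mathcal{M}\mathbf{p}\le \mathbf{p}^\top\mathcal{M}\mathbf{q}$ for every probability vector $\mathbf{q}\in\Delta_m$ supported in $X$. $\mathrm{Nash}(\mathcal{M}\mid X)$ denotes the (unique) maximum-entropy such symmetric Nash equilibrium, i.e. the one maximizing $-\sum_j \mathbf{p}_j\log\mathbf{p}_j$, and $\mathrm{supp}(\mathbf{p})=\{s:\mathbf{p}_s>0\}$. Nash Clustering: set $C_0=\emptyset$ and $C_i=\mathrm{supp}\big(\mathrm{Nash}(\mathcal{M}\mid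 S_g\setminus\bigcup_{k=0}^{i-1}C_k)\big)$ for $i\ge1$ (defined while the remaining set is nonempty); the Nash Clustering is the collection $C=\{C_j: j\ge 1,\ C_j\neq\emptyset\}$, indexed in this order. *)

From HB Require Import structures.
From mathcomp Require Import all_boot all_order all_algebra.
From mathcomp Require Import reals exp.
Set Implicit Arguments. Unset Strict Implicit. Unset Printing Implicit Defensive.
Import Order.TTheory GRing.Theory Num.Theory.
Local Open Scope ring_scope.

(* Pure strategies S_g = {1,...,m} are represented by 'I_m (0-indexed).
   Mixed strategies are vectors p : 'I_m -> R. *)

Definition bil (R : realType) (m : nat) (M : 'M[R]_m) (p q : 'I_m -> R) : R :=
  \sum_(i < m) \sum_(j < m) p i * M i j * q j.

Definition prob_on (R : realType) (m : nat) (X : {set 'I_m}) (p : 'I_m -> R) : Prop :=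
  (forall s, 0 <= p s) /\ \sum_(s < m) p s = 1 /\ (forall s, s \notin X -> p s = 0).

Definition sym_nash (R : realType) (m : nat) (M : 'M[R]_m) (X : {set 'I_m})
    (p : 'I_m -> R) : Prop :=
  prob_on X p /\
  forall q : 'I_m -> R, prob_on X q ->
    bil M q p <= bil M p p /\ bil M p p <= bil M p q.

Definition entropy (R : realType) (m : nat) (p : 'I_m -> R) : R :=
  - \sum_(j < m) p j * ln (p j).

(* p is the maximum-entropy symmetric Nash equilibrium Nash(M | X) *)
Definition is_maxent_nash (R : realType) (m : nat) (M : 'M[R]_m) (X : {set 'I_m})
    (p : 'I_m -> R) : Prop :=
  sym_nash M X p /\ forall q, sym_nash M X q -> entropy q <= entropy p.

Definition supp (R : realType) (m : nat) (p : 'I_m -> R) : {set 'I_m} :=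
  [set s | p s != 0].

(* remaining strategies before step k (0-indexed): S_g minus C_0 ... C_(k-1) *)
Definition remaining (m : nat) (C : nat -> {set 'I_m}) (k : nat) : {set 'I_m} :=
  ~: \bigcup_(r < k) C r.

(* C_0, ..., C_(K-1) is the Nash clustering of M (0-indexed): each C_k is the
   support of Nash(M | remaining set), and the procedure stops exactly when the
   remaining set becomes empty. *)
Definition nash_clustering (R : realType) (m : nat) (M : 'M[R]_m)
    (K : nat) (C : nat -> {set 'I_m}) : Prop :=
  (forall k, (k < K)%N ->
     exists p : 'I_m -> R, is_maxent_nash M (remaining C k) p /\ C k = supp p) /\
  remaining C K = set0.

Definition tail_union (m : nat) (K : nat) (C : nat -> {set 'I_m}) (k : nat) : {set 'I_m} :=
  \bigcup_(k <= r < K) C r.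

(* The value p^T M p of a skew-symmetric game is 0 for every p.  For i <= j the
   support of p_j lies in the tail union on which p_i is an equilibrium, so p_j
   is an admissible deviation against p_i and p_i^T M p_j >= p_i^T M p_i = 0;
   for i > j the roles are swapped and p_i^T M p_j <= p_j^T M p_j = 0. *)
From HB Require Import structures.
From mathcomp Require Import all_boot all_order all_algebra.
From mathcomp Require Import reals exp lra.
Set Implicit Arguments. Unset Strict Implicit. Unset Printing Implicit Defensive.
Import Order.TTheory GRing.Theory Num.Theory.
Local Open Scope ring_scope.

Section SkewGame.

Variables (R : realType) (m : nat) (M : 'M[R]_m).
Hypothesis skewM : M^T = - M.

Lemma bil_skew (p q : 'I_m -> R) : bil M p q = - bil M q p.
Proof.
rewrite /bil exchange_big -sumrN; apply: eq_bigr => j _.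
rewrite -sumrN; apply: eq_bigr => i _.
have -> : M i j = - M j i by move/matrixP/(_ j i): skewM; rewrite !mxE.
by rewrite mulrN mulNr mulrAC [q j * _ * _]mulrC mulrA.
Qed.

Lemma bil_skew_self (p : 'I_m -> R) : bil M p p = 0.
Proof. by have := bil_skew p p; lra. Qed.

Lemma sym_nash_skew_payoff (X Y : {set 'I_m}) (p q : 'I_m -> R) :
  X \subset Y -> sym_nash M Y p -> prob_on X q ->
  bil M q p <= 0 /\ 0 <= bil M p q.
Proof.
move=> sXY [_ nash_p] [q_ge0 [q_sum1 q_supp]].
have q_onY : prob_on Y q.
  by split=> //; split=> // s sNY; apply/q_supp/(contra (subsetP sXY s)).
by have [] := nash_p q q_onY; rewrite bil_skew_self.
Qed.

End SkewGame.

Lemma tail_union_subset (m K : nat) (C : nat -> {set 'I_m}) (i j : nat) :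
  (i <= j)%N -> tail_union K C j \subset tail_union K C i.
Proof.
move=> le_ij; rewrite /tail_union.
have [le_jK | lt_Kj] := leqP j K.
  by rewrite (big_cat_nat le_ij le_jK) subsetUr.
by rewrite big_geq ?sub0set // ltnW.
Qed.

Theorem theorem2 (R : realType) (m : nat) (M : 'M[R]_m)
    (K : nat) (C : nat -> {set 'I_m}) (P : nat -> 'I_m -> R) :
  M^T = - M ->
  nash_clustering M K C ->
  (forall k, (k < K)%N -> is_maxent_nash M (tail_union K C k) (P k)) ->
  (forall i j, (i <= j < K)%N -> 0 <= bil M (P i) (P j)) /\
  (forall i j, (j < i < K)%N -> bil M (P i) (P j) <= 0).
Proof.
move=> skewM _ maxentP.
have nashP k : (k < K)%N -> sym_nash M (tail_union K C k) (P k).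
  by case/maxentP.
have probP k : (k < K)%N -> prob_on (tail_union K C k) (P k).
  by case/nashP.
split=> [i j /andP[le_ij lt_jK] | i j /andP[lt_ji lt_iK]].
- have lt_iK := leq_ltn_trans le_ij lt_jK.
  have [_ ge0] := sym_nash_skew_payoff skewM (tail_union_subset K C le_ij)
                    (nashP i lt_iK) (probP j lt_jK).
  exact ge0.
- have lt_jK := ltn_trans lt_ji lt_iK.
  have [le0 _] := sym_nash_skew_payoff skewM (tail_union_subset K C (ltnW lt_ji))
                    (nashP j lt_jK) (probP i lt_iK).
  exact le0.
Qed.
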